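(* For every integer $n\ge 2$ there exists a reduced integer $m$ with $n\le m\le 4n-6$ such that $|\mathcal{M}_x(n)|\le|\mathcal{M}_x(m)|$ for all $x\in\mathbb{R}$.
   Context: Let $p_i$ denote the $i$-th prime ($p_1=2,p_2=3,\dots$). A positive integer $2^{a_1}3^{a_2}5^{a_3}\cdots=\prod_i p_i^{a_i}$ (with $a_i=0$ for all sufficiently large $i$) is called reduced if $\left\lfloor\frac{a_i+1}{a_j+2}\right\rfloor<\frac{\log p_j}{\log p_i}$ for all $i,j\ne 1$, and $2^{a_1}<8p_j^2$ for every $j$ with $a_j=0$. For a positive integer $n$ and $x\in\mathbb{R}$, a positive divisor $d$ of $n$ is maximal with respect to $x$ if $d\le x$ and there is no other positive divisor $d'$ of $n$ with $d'\le x$ and $d\mid d'$; $\mathcal{M}_x(n)$ denotes the set of such divisors. *)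

From Stdlib Require Import Reals.
From mathcomp Require Import all_boot.

Set Implicit Arguments.
Unset Strict Implicit.
Unset Printing Implicit Defensive.

(* The exponent a_i of the prime p_i in m is [logn p m].  The indices i <> 1
   are exactly the primes p <> 2. *)
Definition reduced (m : nat) : Prop :=
  0 < m /\
  (forall p q : nat, prime p -> prime q -> p <> 2 -> q <> 2 ->
     Rlt (INR ((logn p m).+1 %/ (logn q m).+2)) (Rdiv (ln (INR q)) (ln (INR p)))) /\
  (forall q : nat, prime q -> logn q m = 0 -> 2 ^ logn 2 m < 8 * q ^ 2).

Definition leRb (d : nat) (x : R) : bool :=
  if Rle_dec (INR d) x then true else false.

Definition maxdivs (x : R) (n : nat) : seq nat :=
  [seq d <- divisors n |
     leRb d x &&
     all (fun d' => ~~ [&& leRb d' x, d %| d' & d' != d]) (divisors n)].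

(** Write n = N * 2^a with N odd.  An element of M_x(N * 2^a) is determined
    by its odd part c, and the odd parts that occur are the divisors c of N
    with c <= x and c * 2^a * r > x whenever r * c divides N.  Hence
    |M_x(N * 2^a)| <= |M_x(M * 2^e)| as soon as these odd parts can be mapped
    injectively to those of M * 2^e, and two such maps do the work.

    If N violates the odd-prime condition of reducedness for p and q, then
    q < p^t where t is the integer part of (a_p + 1) / (a_q + 2); trading p^t
    for q in the divisors with many factors p shows that N is dominated by a
    smaller odd number.  Iterating gives an odd M <= N satisfying that
    condition, and the least e with n <= M * 2^e keeps M * 2^e <= 2n - 2.

    If 2^e is then too large for 2^(a_1) < 8 p_j^2, trade powers of 2 for the
    product of the consecutive primes starting at the least prime not dividing
    M, multiplying each odd part by the longest prefix of these primes that
    stays below x.  This at most doubles the number and makes it reduced. *)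

From Stdlib Require Import Reals Lra Classical.
From mathcomp Require Import all_boot zify ring.

Set Implicit Arguments.
Unset Strict Implicit.
Unset Printing Implicit Defensive.

(** * Maximal divisors and their odd parts *)

Lemma leRb_leq (x : R) a b : a <= b -> leRb b x -> leRb a x.
Proof.
rewrite /leRb => /leP /le_INR le_ab.
case: Rle_dec => // le_bx _; case: Rle_dec => // nle_ax.
by case: nle_ax; apply: Rle_trans le_bx.
Qed.

Lemma mem_maxdivs x n d : 0 < n ->
  (d \in maxdivs x n) <->
  [/\ d %| n, leRb d x & forall r, prime r -> r * d %| n -> ~~ leRb (r * d) x].
Proof.
move=> n_gt0; rewrite /maxdivs mem_filter -dvdn_divisors //; split.
- case/andP=> /andP[d_x /allP maxd] d_n; split=> // r r_pr rd_n.
  have d_gt0 : 0 < d := dvdn_gt0 n_gt0 d_n.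
  have rd_neq : r * d != d by rewrite -[X in _ != X]mul1n eqn_pmul2r // neq_ltn prime_gt1 ?orbT.
  have := maxd (r * d); rewrite -dvdn_divisors // rd_n dvdn_mull // rd_neq !andbT.
  by move/(_ isT).
- case=> d_n d_x maxd; rewrite d_n d_x andbT /=; apply/allP=> d'.
  rewrite -dvdn_divisors // => d'_n; apply/negP=> /and3P[d'_x /dvdnP[k def_d'] neq].
  have d_gt0 : 0 < d := dvdn_gt0 n_gt0 d_n.
  have d'_gt0 : 0 < d' := dvdn_gt0 n_gt0 d'_n.
  have k_gt1 : 1 < k.
    by move: neq d'_gt0; rewrite def_d'; case: (k) => [|[|k']] //; rewrite mul1n eqxx.
  have kd_d' : pdiv k * d %| d' by rewrite def_d' dvdn_pmul2r // pdiv_dvd.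
  have := maxd _ (pdiv_prime k_gt1) (dvdn_trans kd_d' d'_n).
  by rewrite (leRb_leq (dvdn_leq d'_gt0 kd_d') d'_x).
Qed.

Lemma maxdivs_dvdn_eq x n d1 d2 :
  d1 \in maxdivs x n -> d2 \in maxdivs x n -> d1 %| d2 -> d1 = d2.
Proof.
rewrite !mem_filter => /andP[/andP[_ /allP max1] _] /andP[/andP[d2_x _] d2_n] d12.
by apply/esym/eqP; move: (max1 _ d2_n); rewrite d2_x d12 /= negbK.
Qed.

Lemma size_maxdivs_le_inj x n m (f : nat -> nat) :
  {in maxdivs x n, forall d, f d \in maxdivs x m} ->
  {in maxdivs x n &, injective f} ->
  size (maxdivs x n) <= size (maxdivs x m).
Proof.
move=> f_maxdivs f_inj; rewrite -(size_map f); apply: uniq_leq_size.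
  by rewrite map_inj_in_uniq // filter_uniq // divisors_uniq.
by move=> _ /mapP[d d_max ->]; apply: f_maxdivs.
Qed.

Lemma maxdivs_p'part_inj x n (p : nat) : 0 < n ->
  {in maxdivs x n &, injective (fun d => d`_p^')}.
Proof.
move=> n_gt0; have maxdivs_gt0 d : d \in maxdivs x n -> 0 < d.
  by case/(mem_maxdivs _ _ n_gt0) => /(dvdn_gt0 n_gt0).
have decomp d : d \in maxdivs x n -> d = d`_p^' * p ^ logn p d.
  by move/maxdivs_gt0 => d_gt0; rewrite -p_part mulnC partnC.
have le_eq d1 d2 : d1 \in maxdivs x n -> d2 \in maxdivs x n ->
    d1`_p^' = d2`_p^' -> logn p d1 <= logn p d2 -> d1 = d2.
  move=> d1_max d2_max eq_p' le12; apply: (maxdivs_dvdn_eq d1_max d2_max).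
  by rewrite (decomp _ d1_max) (decomp _ d2_max) eq_p' dvdn_pmul2l ?part_gt0 ?dvdn_exp2l.
move=> d1 d2 d1_max d2_max eq_p'.
case: (leqP (logn p d1) (logn p d2)) => [|/ltnW]; first exact: le_eq.
by move/(le_eq _ _ d2_max d1_max (esym eq_p'))/esym.
Qed.

Section LastFit.
Variables (x : R) (f : nat -> nat).

Fixpoint last_fit k := if leRb (f k) x then k else if k is k'.+1 then last_fit k' else 0.

Lemma last_fit_le k : last_fit k <= k.
Proof. by elim: k => [|k IH] /=; case: ifP => //; lia. Qed.

Lemma leRb_last_fit k : leRb (f 0) x -> leRb (f (last_fit k)) x.
Proof. by move=> f0_x; elim: k => [|k IH] /=; case: ifP. Qed.

Lemma last_fit_max k : last_fit k < k -> ~~ leRb (f (last_fit k).+1) x.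
Proof.
elim: k => [|k IH] //=; case: ifP => [_|fk_x]; first lia.
case: (ltngtP (last_fit k) k) (last_fit_le k) => [lt_k _ _ | //| -> _ _].
  exact: IH.
by rewrite fk_x.
Qed.

End LastFit.

Lemma p'part_odd_mul_pow2 c j : odd c -> (c * 2 ^ j)`_2^' = c.
Proof.
move=> c_odd; have c_gt0 : 0 < c by rewrite odd_gt0.
rewrite partnM ?expn_gt0 // partnX (@part_p'nat _ 2) ?pnatNK ?pnat_id // exp1n muln1.
by rewrite part_pnat_id // p'natE // dvdn2 c_odd.
Qed.

Lemma odd_p'part2 d : odd d`_2^'.
Proof. by have := part_pnat 2^' d; rewrite p'natE // dvdn2 negbK. Qed.

Lemma logn_eq0 p n : prime p -> 0 < n -> (logn p n == 0) = ~~ (p %| n).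
Proof. by move=> p_pr n_gt0; rewrite -leqn0 leqNgt logn_gt0 mem_primes p_pr n_gt0. Qed.

(** For odd [N], the odd parts of the elements of M_x(N * 2^a). *)
Definition odd_maxdiv x a N c :=
  [/\ c %| N, leRb c x & forall r, prime r -> r * c %| N -> ~~ leRb (c * 2 ^ a * r) x].

Lemma odd_maxdiv_p'part x a N d : odd N ->
  d \in maxdivs x (N * 2 ^ a) -> odd_maxdiv x a N d`_2^'.
Proof.
move=> N_odd; have n_gt0 : 0 < N * 2 ^ a by rewrite muln_gt0 odd_gt0 ?expn_gt0.
case/(mem_maxdivs _ _ n_gt0) => d_n d_x d_max.
have d_gt0 : 0 < d := dvdn_gt0 n_gt0 d_n.
set c := d`_2^'; set b := logn 2 d.
have def_d : d = c * 2 ^ b by rewrite -p_part mulnC partnC.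
have c_N : c %| N.
  rewrite -(@Gauss_dvdl _ _ (2 ^ a)) ?coprimeXr ?coprimen2 ?odd_p'part2 //.
  exact: dvdn_trans (dvdn_part _ _) d_n.
have b_le_a : b <= a.
  by have := dvdn_leq_log 2 n_gt0 d_n; rewrite logn_Gauss ?coprime2n // pfactorK.
split=> //; first by apply: leRb_leq d_x; rewrite dvdn_leq // dvdn_part.
move=> r r_pr rc_N; case: ltngtP b_le_a => // [b_lt_a _ | eq_ba _].
- have : ~~ leRb (2 * d) x.
    apply: d_max => //; rewrite def_d mulnCA -expnS dvdn_mul ?(dvdn_trans c_N) //.
    by rewrite dvdn_exp2l.
  apply: contra; apply: leRb_leq; rewrite def_d mulnCA -expnS -mulnA leq_mul //.
  by rewrite (leq_trans (leq_pexp2l _ b_lt_a)) // leq_pmulr // prime_gt0.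
- have : ~~ leRb (r * d) x.
    by apply: d_max; rewrite // def_d eq_ba mulnA dvdn_pmul2r ?expn_gt0.
  by apply: contra; apply: leRb_leq; rewrite def_d eq_ba mulnC.
Qed.

Lemma odd_maxdiv_lift x e M c : 0 < M -> odd_maxdiv x e M c ->
  c * 2 ^ last_fit x (fun j => c * 2 ^ j) e \in maxdivs x (M * 2 ^ e).
Proof.
move=> M_gt0 [c_M c_x c_max]; have m_gt0 : 0 < M * 2 ^ e by rewrite muln_gt0 M_gt0 expn_gt0.
set j := last_fit _ _ e; have j_le_e : j <= e := last_fit_le _ _ e.
apply/(mem_maxdivs _ _ m_gt0); split.
- by rewrite dvdn_mul // dvdn_exp2l.
- by apply: (@leRb_last_fit _ (fun i => c * 2 ^ i)); rewrite muln1.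
move=> r r_pr; case: ltngtP j_le_e => // [j_lt_e _ _ | eq_je _].
- apply: contra (last_fit_max j_lt_e); apply: leRb_leq.
  by rewrite expnS mulnCA leq_mul // prime_gt1.
- rewrite eq_je mulnA dvdn_pmul2r ?expn_gt0 // => /(c_max _ r_pr).
  by apply: contra; apply: leRb_leq; rewrite mulnC mulnA.
Qed.

Lemma maxdivs_le_odd_maxdiv x a e N M (h : nat -> nat) : odd N -> odd M ->
  (forall c, odd_maxdiv x a N c -> odd_maxdiv x e M (h c)) ->
  (forall c1 c2, odd_maxdiv x a N c1 -> odd_maxdiv x a N c2 -> h c1 = h c2 -> c1 = c2) ->
  size (maxdivs x (N * 2 ^ a)) <= size (maxdivs x (M * 2 ^ e)).
Proof.
move=> N_odd M_odd h_max h_inj.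
have n_gt0 : 0 < N * 2 ^ a by rewrite muln_gt0 odd_gt0 ?expn_gt0.
pose lift c := c * 2 ^ last_fit x (fun j => c * 2 ^ j) e.
apply: (@size_maxdivs_le_inj _ _ _ (fun d => lift (h d`_2^'))) => [d d_max | d1 d2 d1_max d2_max].
  by apply: odd_maxdiv_lift; [rewrite odd_gt0 | apply/h_max/(odd_maxdiv_p'part N_odd)].
have [hc1_M _ _] := h_max _ (odd_maxdiv_p'part N_odd d1_max).
have [hc2_M _ _] := h_max _ (odd_maxdiv_p'part N_odd d2_max).
move/(congr1 (fun m => m`_2^')); rewrite !p'part_odd_mul_pow2 ?(dvdn_odd _ M_odd) //.
move/h_inj => eq_p'; apply: (maxdivs_p'part_inj n_gt0 d1_max d2_max).
exact: eq_p' (odd_maxdiv_p'part _ d1_max) (odd_maxdiv_p'part _ d2_max).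
Qed.

(** * Reducing the odd part *)

(** The last condition is c s / N <= chi c r / M with denominators cleared. *)
Definition dominates N M := exists chi : nat -> nat,
  [/\ forall c, c %| N -> chi c %| M /\ chi c <= c,
      forall c1 c2, c1 %| N -> c2 %| N -> chi c1 = chi c2 -> c1 = c2 &
      forall c r, c %| N -> prime r -> r * chi c %| M ->
        exists2 s, prime s & s * c %| N /\ c * s * M <= N * chi c * r].

Lemma dominates_refl N : dominates N N.
Proof.
exists id; split=> // c r c_N r_pr rc_N; exists r => //.
by split; rewrite // mulnC mulnA.
Qed.

Lemma dominates_trans N1 N2 N3 : 0 < N2 ->
  dominates N1 N2 -> dominates N2 N3 -> dominates N1 N3.
Proof.
move=> N2_gt0 [f [f_dvd f_inj f_ext]] [g [g_dvd g_inj g_ext]].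
exists (g \o f); split=> /=.
- move=> c /f_dvd[fc_N2 fc_le]; have [gfc_N3 gfc_le] := g_dvd _ fc_N2.
  by split; last exact: leq_trans fc_le.
- move=> c1 c2 c1_N1 c2_N1 /g_inj eq_f; apply: f_inj => //.
  by apply: eq_f; [case: (f_dvd _ c1_N1) | case: (f_dvd _ c2_N1)].
move=> c r c_N1 r_pr; have [fc_N2 _] := f_dvd c c_N1.
case/(g_ext _ _ fc_N2 r_pr) => s1 s1_pr [s1fc_N2 le_s1].
have [s s_pr [sc_N1 le_s]] := f_ext _ _ c_N1 s1_pr s1fc_N2.
exists s => //; split=> //.
have pos : 0 < N2 * f c * s1 by rewrite !muln_gt0 N2_gt0 (dvdn_gt0 N2_gt0 fc_N2) prime_gt0.
rewrite -(leq_pmul2l pos).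
by apply: leq_trans (leq_trans _ (leq_mul le_s le_s1)) _; apply: eq_leq; ring.
Qed.

Lemma dominates_maxdivs_le x N M a e : dominates N M -> odd N -> odd M ->
  N * 2 ^ a <= M * 2 ^ e ->
  size (maxdivs x (N * 2 ^ a)) <= size (maxdivs x (M * 2 ^ e)).
Proof.
move=> [chi [chi_dvd chi_inj chi_ext]] N_odd M_odd le_NM.
apply: (maxdivs_le_odd_maxdiv (h := chi)) => //; last first.
  by move=> c1 c2 [c1_N _ _] [c2_N _ _]; apply: chi_inj.
move=> c [c_N c_x c_max]; have [chic_M chic_le] := chi_dvd c c_N.
split=> //; first exact: leRb_leq c_x.
move=> r r_pr /(chi_ext _ _ c_N r_pr)[s s_pr [sc_N le_s]].
apply: contra (c_max _ s_pr sc_N); apply: leRb_leq.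
rewrite -(leq_pmul2r (odd_gt0 M_odd)).
apply: leq_trans (leq_trans _ (leq_mul le_s (leqnn (2 ^ a)))) _; first by apply: eq_leq; ring.
apply: leq_trans (leq_trans _ (leq_mul le_NM (leqnn (chi c * r)))) _; first by apply: eq_leq; ring.
by apply: eq_leq; ring.
Qed.

Section PrimePairShift.
Variables p q : nat.
Hypotheses (p_pr : prime p) (q_pr : prime q) (p_neq_q : p != q).

Local Notation pqk x y k := (p ^ x * q ^ y * k).

Definition pq_coprime k := coprime p k && coprime q k.

Lemma pq_coprime_gt0 k : pq_coprime k -> 0 < k.
Proof.
by case: k => // /andP[]; rewrite /coprime gcdn0 => /eqP p1; have := prime_gt1 p_pr; rewrite p1.
Qed.

Lemma pqk_gt0 x y k : pq_coprime k -> 0 < pqk x y k.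
Proof. by move=> /pq_coprime_gt0 k_gt0; rewrite !muln_gt0 k_gt0 !expn_gt0 !prime_gt0. Qed.

Lemma logn_pqk x y k : pq_coprime k ->
  logn p (pqk x y k) = x /\ logn q (pqk x y k) = y.
Proof.
move=> /andP[cop_pk cop_qk]; have cop_pq : coprime p q by rewrite prime_coprime ?dvdn_prime2.
split.
- by rewrite -mulnA mulnC logn_Gauss ?pfactorK // coprimeMr cop_pk coprimeXr.
- rewrite mulnAC logn_Gauss ?pfactorK // coprimeMr cop_qk coprimeXr //.
  by rewrite coprime_sym.
Qed.

Lemma pqk_inj x y k x' y' k' : pq_coprime k -> pq_coprime k' ->
  pqk x y k = pqk x' y' k' -> [/\ x = x', y = y' & k = k'].
Proof.
move=> cop_k cop_k' eq_pqk.
have [lp lq] := logn_pqk x y cop_k; have [lp' lq'] := logn_pqk x' y' cop_k'.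
have eq_x : x = x' by rewrite -lp -lp' eq_pqk.
have eq_y : y = y' by rewrite -lq -lq' eq_pqk.
have pq_gt0 : 0 < p ^ x * q ^ y by rewrite muln_gt0 !expn_gt0 !prime_gt0.
by split=> //; apply/eqP; rewrite -(eqn_pmul2l pq_gt0) eq_pqk eq_x eq_y.
Qed.

Lemma dvdn_pqk x y k A B K : x <= A -> y <= B -> k %| K -> pqk x y k %| pqk A B K.
Proof. by move=> le_xA le_yB k_K; rewrite !dvdn_mul ?dvdn_exp2l. Qed.

Lemma coprime_pq_pow_mul k x y : pq_coprime k -> coprime k (p ^ x * q ^ y).
Proof. by case/andP=> cop_pk cop_qk; rewrite coprimeMr !coprimeXr // coprime_sym ?cop_pk. Qed.

Lemma pq_factor_coprime c : 0 < c -> exists2 k, pq_coprime k & c = pqk (logn p c) (logn q c) k.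
Proof.
move=> c_gt0; have [c1 cop_pc1 def_c] := pfactor_coprime p_pr c_gt0.
have c1_gt0 : 0 < c1 by move: c_gt0; rewrite def_c muln_gt0 => /andP[].
have [k cop_qk def_c1] := pfactor_coprime q_pr c1_gt0.
have cop_k : pq_coprime k.
  by rewrite /pq_coprime cop_qk (coprime_dvdr _ cop_pc1) // def_c1 dvdn_mulr.
have def_c' : c = pqk (logn p c) (logn q c1) k by rewrite {1}def_c {1}def_c1; ring.
have [_ lq] := logn_pqk (logn p c) (logn q c1) cop_k.
by rewrite -def_c' in lq; exists k; rewrite // lq.
Qed.

Lemma pqk_divisor A B K c : pq_coprime K -> c %| pqk A B K ->
  exists x y k, [/\ pq_coprime k, c = pqk x y k, x <= A, y <= B & k %| K].
Proof.
move=> cop_K c_N; have N_gt0 := pqk_gt0 A B cop_K.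
have [k cop_k def_c] := pq_factor_coprime (dvdn_gt0 N_gt0 c_N).
have [lA lB] := logn_pqk A B cop_K.
exists (logn p c), (logn q c), k; split=> //.
- by rewrite -[X in _ <= X]lA dvdn_leq_log.
- by rewrite -[X in _ <= X]lB dvdn_leq_log.
have : k %| pqk A B K by apply: dvdn_trans c_N; rewrite def_c dvdn_mull.
by rewrite Gauss_dvdr // coprime_pq_pow_mul.
Qed.

Lemma prime_mul_pqk_dvdn r x y k A B K : prime r -> pq_coprime k -> pq_coprime K ->
  r * pqk x y k %| pqk A B K -> [\/ r = p /\ x < A, r = q /\ y < B | r * k %| K].
Proof.
move=> r_pr cop_k cop_K rc_N; have N_gt0 := pqk_gt0 A B cop_K.
have [lA lB] := logn_pqk A B cop_K.
case: (eqVneq r p) => [eq_rp | neq_rp].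
  apply: Or31; split=> //; rewrite -lA; move/(dvdn_leq_log p N_gt0): rc_N.
  by rewrite eq_rp !mulnA -expnS; have [-> _] := logn_pqk x.+1 y cop_k.
case: (eqVneq r q) => [eq_rq | neq_rq].
  apply: Or32; split=> //; rewrite -lB; move/(dvdn_leq_log q N_gt0): rc_N.
  have -> : r * pqk x y k = pqk x y.+1 k by rewrite eq_rq expnS; ring.
  by have [_ ->] := logn_pqk x y.+1 cop_k.
apply: Or33; have : r * k %| pqk A B K by apply: dvdn_trans rc_N; rewrite mulnCA dvdn_mull.
have cop_r s : prime s -> r != s -> coprime s r.
  by move=> s_pr; rewrite prime_coprime // dvdn_prime2 // eq_sym.
by rewrite Gauss_dvdr // coprime_pq_pow_mul // /pq_coprime !coprimeMr !cop_r.
Qed.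

Lemma pqk_shift_eq x y k t : t <= x -> pqk x y k * q = pqk (x - t) y.+1 k * p ^ t.
Proof. by move=> le_tx; rewrite -{1}(subnK le_tx) expnD expnS; ring. Qed.

Variables A B K t : nat.
Hypotheses (cop_K : pq_coprime K) (t_gt0 : 0 < t) (q_le_pt : q <= p ^ t)
  (tB_le_A : t * B.+2 <= A.+1).

Local Notation N := (pqk A B K).
Local Notation N' := (pqk (A - t) B.+1 K).

(** [shift] trades p^t for q in p^x q^y k iff x + t (y + 1) > A; this
    threshold, rather than x > A - t, is what makes it injective. *)
Definition shift c :=
  if A < logn p c + t * (logn q c).+1 then c * q %/ p ^ t else c.

Let pt_gt0 : 0 < p ^ t. Proof. by rewrite expn_gt0 prime_gt0. Qed.

Lemma shift_exponent_le : t <= A.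
Proof. have : t * 2 <= t * B.+2 by rewrite leq_mul2l ltnS ltnS leq0n orbT. lia. Qed.

Lemma shifted_mul_pt : N' * p ^ t = N * q.
Proof. by rewrite (pqk_shift_eq _ _ shift_exponent_le). Qed.

Lemma shifted_leq : N' <= N.
Proof. by rewrite -(leq_pmul2r pt_gt0) shifted_mul_pt leq_mul2l q_le_pt orbT. Qed.

Lemma moved_ge x y : y <= B -> A < x + t * y.+1 -> t <= x.
Proof.
move=> le_yB moved; have : t * y.+1 <= t * B.+1 by rewrite leq_mul2l ltnS le_yB orbT.
have := mulnS t B.+1; lia.
Qed.

Lemma shift_pqk x y k : pq_coprime k -> y <= B ->
  shift (pqk x y k) = if A < x + t * y.+1 then pqk (x - t) y.+1 k else pqk x y k.
Proof.
move=> cop_k le_yB; rewrite /shift; have [-> ->] := logn_pqk x y cop_k.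
case: ifP => // /(moved_ge le_yB) le_tx.
by rewrite (pqk_shift_eq _ _ le_tx) mulnK.
Qed.

Lemma shift_dvdn_leq c : c %| N -> shift c %| N' /\ shift c <= c.
Proof.
case/(pqk_divisor cop_K) => x [y [k [cop_k -> le_xA le_yB k_K]]].
rewrite shift_pqk //; case: ifP => [moved | /negbT]; last first.
  rewrite -leqNgt => fixed; have : t <= t * y.+1 by rewrite leq_pmulr.
  by split=> //; apply: dvdn_pqk => //; lia.
have le_tx := moved_ge le_yB moved.
split; first by apply: dvdn_pqk => //; lia.
rewrite -(leq_pmul2r pt_gt0) -pqk_shift_eq //.
by rewrite leq_mul2l q_le_pt orbT.
Qed.

Lemma shift_inj c1 c2 : c1 %| N -> c2 %| N -> shift c1 = shift c2 -> c1 = c2.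
Proof.
have moved_img x y k x' y' k' : pq_coprime k -> pq_coprime k' -> y <= B ->
    A < x + t * y.+1 -> pqk (x - t) y.+1 k = pqk x' y' k' -> A < x' + t * y'.+1.
  move=> cop_k cop_k' le_yB moved /(pqk_inj cop_k cop_k')[<- <- _].
  have := moved_ge le_yB moved; have := mulnS t y.+1; lia.
case/(pqk_divisor cop_K) => x1 [y1 [k1 [cop1 -> _ le1 _]]].
case/(pqk_divisor cop_K) => x2 [y2 [k2 [cop2 -> _ le2 _]]].
rewrite !shift_pqk //; case: ifP => moved1; case: ifP => moved2 eq_shift.
- have [eq_x eq_y ->] := pqk_inj cop1 cop2 eq_shift.
  have := moved_ge le1 moved1; have := moved_ge le2 moved2.
  by case: eq_y => -> ? ?; have -> : x1 = x2 by lia.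
- by move: moved2 (moved_img _ _ _ _ _ _ cop1 cop2 le1 moved1 eq_shift) => ->.
- by move: moved1 (moved_img _ _ _ _ _ _ cop2 cop1 le2 moved2 (esym eq_shift)) => ->.
- by [].
Qed.

Lemma shift_ext_moved x y k r : pq_coprime k -> x <= A -> y <= B -> k %| K -> t <= x ->
  prime r -> r * pqk (x - t) y.+1 k %| N' -> r * pqk x y k %| N.
Proof.
move=> cop_k le_xA le_yB k_K le_tx r_pr.
case/(prime_mul_pqk_dvdn r_pr cop_k cop_K) => [[-> lt_x] | [-> lt_y] | rk_K].
- by rewrite !mulnA -expnS dvdn_pqk //; have := shift_exponent_le; lia.
- have -> : q * pqk x y k = pqk x y.+1 k by rewrite expnS; ring.
  exact: dvdn_pqk.
- by rewrite mulnCA dvdn_pqk.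
Qed.

Lemma shift_ext_fixed x y k r : pq_coprime k -> y <= B -> k %| K -> x + t * y.+1 <= A ->
  prime r -> r * pqk x y k %| N' -> exists2 s, prime s & s * pqk x y k %| N /\ s * N' <= N * r.
Proof.
move=> cop_k le_yB k_K fixed r_pr; have le_N'N := shifted_leq.
have le_t : t <= t * y.+1 by rewrite leq_pmulr.
case/(prime_mul_pqk_dvdn r_pr cop_k cop_K) => [[-> lt_x] | [-> lt_y] | rk_K].
- exists p => //; split; last by rewrite mulnC leq_mul.
  by rewrite !mulnA -expnS dvdn_pqk //; lia.
- case: ltngtP le_yB => // [lt_yB | eq_yB] _.
    exists q => //; split; last by rewrite mulnC leq_mul.
    have -> : q * pqk x y k = pqk x y.+1 k by rewrite expnS; ring.
    by rewrite dvdn_pqk //; lia.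
  exists p => //; split.
    by rewrite !mulnA -expnS dvdn_pqk //; move: fixed; rewrite eq_yB; have := mulnS t B; lia.
  rewrite -shifted_mul_pt mulnC leq_mul2l; apply/orP; right.
  by rewrite -[X in X <= _](expn1 p) leq_pexp2l // prime_gt0.
- exists r => //; split; first by rewrite mulnCA dvdn_pqk //; lia.
  by rewrite mulnC leq_mul.
Qed.

Lemma shift_ext c r : c %| N -> prime r -> r * shift c %| N' ->
  exists2 s, prime s & s * c %| N /\ c * s * N' <= N * shift c * r.
Proof.
case/(pqk_divisor cop_K) => x [y [k [cop_k -> le_xA le_yB k_K]]] r_pr.
rewrite shift_pqk //; case: ifP => [moved | /negbT]; last first.
  rewrite -leqNgt => fixed /(shift_ext_fixed cop_k le_yB k_K fixed r_pr)[s s_pr [sc_N le_s]].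
  exists s => //; split=> //.
  by rewrite -[_ * s * _]mulnA [_ * _ * r]mulnAC [_ * pqk x y k]mulnC leq_mul2l le_s orbT.
have le_tx := moved_ge le_yB moved.
move/(shift_ext_moved cop_k le_xA le_yB k_K le_tx r_pr) => rc_N; exists r => //.
split=> //.
apply: eq_leq; apply/eqP; rewrite -(eqn_pmul2r pt_gt0); apply/eqP.
set d := pqk x y k; set d' := pqk (x - t) y.+1 k.
have shifted_d : d * q = d' * p ^ t by apply: pqk_shift_eq.
transitivity (d * r * (N' * p ^ t)); first by ring.
rewrite shifted_mul_pt; have -> : N * d' * r * p ^ t = N * r * (d' * p ^ t) by ring.
by rewrite -shifted_d; ring.
Qed.

Lemma dominates_shift : dominates N N'.
Proof.
exists shift; split; [exact: shift_dvdn_leq | exact: shift_inj | exact: shift_ext].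
Qed.

End PrimePairShift.

Section LnRatio.
Local Open Scope R_scope.

Lemma lt_INR_lnratio (p q t : nat) : (1 < p)%N -> (0 < q)%N ->
  INR t < ln (INR q) / ln (INR p) <-> (p ^ t < q)%N.
Proof.
move=> p_gt1 q_gt0.
have INR_gt0 n : (0 < n)%N -> (0 < INR n) by move=> /ltP; apply: lt_0_INR.
have lnp_gt0 : (0 < ln (INR p)).
  rewrite -ln_1; apply: ln_increasing; first lra.
  by apply: (lt_INR 1); apply/ltP.
have INR_expn : INR (p ^ t) = (INR p ^ t).
  by rewrite -pow_INR; congr INR; elim: t => //= t IH; rewrite expnS IH.
have -> : (INR t < ln (INR q) / ln (INR p)) <-> (ln (INR (p ^ t)) < ln (INR q)).
  rewrite INR_expn ln_pow; last exact: INR_gt0 (ltnW p_gt1).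
  split=> H.
  - have := Rmult_lt_compat_r _ _ _ lnp_gt0 H.
    by rewrite /Rdiv Rmult_assoc Rinv_l ?Rmult_1_r; lra.
  - apply: (Rmult_lt_reg_r (ln (INR p))) => //.
    by rewrite /Rdiv Rmult_assoc Rinv_l ?Rmult_1_r; lra.
have pt_gt0 : (0 < p ^ t)%N by rewrite expn_gt0 ltnW.
split=> [/ln_lt_inv lt | /ltP /lt_INR lt]; last exact: ln_increasing (INR_gt0 _ pt_gt0) lt.
by apply/ltP/INR_lt/lt; apply: INR_gt0.
Qed.

End LnRatio.

(** The odd-prime condition of [reduced], in the integer form given by
    [lt_INR_lnratio]. *)
Definition odd_reduced M := forall p q, prime p -> prime q -> p <> 2 -> q <> 2 ->
  p ^ ((logn p M).+1 %/ (logn q M).+2) < q.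

Lemma exists_smaller_dominated N : odd N -> ~ odd_reduced N ->
  exists2 N', N' < N & odd N' /\ dominates N N'.
Proof.
move=> N_odd not_red.
have [p [q [p_pr q_pr p_odd q_odd le_q]]] : exists p q, [/\ prime p, prime q,
    odd p, odd q & q <= p ^ ((logn p N).+1 %/ (logn q N).+2)].
  apply: NNPP => no_pq; apply: not_red => p q p_pr q_pr p2 q2; rewrite ltnNge.
  apply/negP => le_q; apply: no_pq; exists p, q.
  by case: (even_prime p_pr) (even_prime q_pr) => // p_odd [] // q_odd.
set A := logn p N in le_q; set B := logn q N in le_q; set t := A.+1 %/ B.+2 in le_q.
have t_gt0 : 0 < t by case: posnP le_q => // ->; rewrite leqNgt prime_gt1.
have p_neq_q : p != q.
  by apply: contraTneq t_gt0 => eq_pq; rewrite /t /A /B eq_pq divn_small.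
have lt_q : q < p ^ t.
  rewrite ltn_neqAle le_q andbT; apply: contraNneq p_neq_q => eq_q.
  by rewrite -(dvdn_prime2 p_pr q_pr) eq_q -(prednK t_gt0) expnS dvdn_mulr.
have [K cop_K def_N] := pq_factor_coprime p_pr q_pr p_neq_q (odd_gt0 N_odd).
have K_odd : odd K by apply: dvdn_odd N_odd; rewrite def_N dvdn_mull.
have dom := dominates_shift p_pr q_pr p_neq_q cop_K t_gt0 (ltnW lt_q) (leq_divM _ _).
rewrite -def_N in dom; exists (p ^ (A - t) * q ^ B.+1 * K); last first.
  by split; rewrite // !oddM !oddX p_odd q_odd K_odd !orbT.
have pt_gt0 : 0 < p ^ t by rewrite expn_gt0 prime_gt0.
rewrite -(ltn_pmul2r pt_gt0) shifted_mul_pt ?leq_divM //.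
by rewrite -def_N ltn_pmul2l ?odd_gt0.
Qed.

Lemma odd_reduction N : odd N ->
  exists M, [/\ odd M, M <= N, odd_reduced M & dominates N M].
Proof.
elim/ltn_ind: N => N IH N_odd; case: (classic (odd_reduced N)) => [N_red | not_red].
  by exists N; split; last exact: dominates_refl.
have [N' lt_N' [N'_odd dom]] := exists_smaller_dominated N_odd not_red.
have [M [M_odd le_M M_red dom']] := IH N' lt_N' N'_odd.
exists M; split=> //; first exact: leq_trans le_M (ltnW lt_N').
exact: dominates_trans (odd_gt0 N'_odd) dom dom'.
Qed.

Lemma reduced_odd_mul_pow2 M e : odd M -> odd_reduced M ->
  (forall r, prime r -> r <> 2 -> ~~ (r %| M) -> 2 ^ e < 8 * r ^ 2) ->
  reduced (M * 2 ^ e).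
Proof.
move=> M_odd M_red small_e; have M_gt0 := odd_gt0 M_odd.
have logn_odd p : prime p -> p <> 2 -> logn p (M * 2 ^ e) = logn p M.
  move=> p_pr /eqP p2; rewrite mulnC logn_Gauss // coprimeXr //.
  by rewrite prime_coprime // dvdn_prime2.
have logn2 : logn 2 (M * 2 ^ e) = e by rewrite logn_Gauss ?coprime2n // pfactorK.
split; first by rewrite muln_gt0 M_gt0 expn_gt0.
split=> [p q p_pr q_pr p2 q2 | q q_pr].
  by rewrite !logn_odd //; apply/lt_INR_lnratio; rewrite ?prime_gt1 ?prime_gt0 ?M_red.
case: (eqVneq q 2) => [-> | /eqP q2]; first by rewrite logn2 => ->.
by rewrite logn2 logn_odd // => /eqP; rewrite logn_eq0 // => /small_e; apply.
Qed.

(** * Padding with consecutive primes *)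

Lemma prod_primes_gt0 s : all prime s -> 0 < \prod_(q <- s) q.
Proof. by move=> /allP s_prime; rewrite big_seq prodn_cond_gt0 // => q /s_prime/prime_gt0. Qed.

Lemma prime_dvdn_prod_primes r s : prime r -> all prime s -> r %| \prod_(q <- s) q -> r \in s.
Proof.
move=> r_pr /allP s_prime; rewrite Euclid_dvd_prod // big_has => /hasP[q q_s].
by rewrite dvdn_prime2 // ?s_prime // => /eqP->.
Qed.

Lemma odd_prod s : all odd s -> odd (\prod_(q <- s) q).
Proof.
elim: s => [|q s IH] /=; first by rewrite big_nil.
by rewrite big_cons oddM; case/andP=> -> /IH.
Qed.

Section MulSortedPrimes.
Variables (x : R) (M : nat) (qs : seq nat) (a e : nat).
Hypotheses (M_odd : odd M) (qs_prime : all prime qs) (qs_odd : all odd qs)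
  (qs_sorted : sorted leq qs) (cop_MQ : coprime M (\prod_(q <- qs) q))
  (le_a : 2 ^ a <= 2 ^ e * \prod_(q <- qs) q) (qs_le : all (fun q => q <= 3 * 2 ^ e) qs).

Local Notation Q := (\prod_(q <- qs) q).
Local Notation prefix i := (\prod_(q <- take i qs) q).
Local Notation suffix i := (\prod_(q <- drop i qs) q).

Lemma prefix_mul_suffix i : prefix i * suffix i = Q.
Proof. by rewrite -big_cat cat_take_drop. Qed.

Lemma prefix_dvdn i : prefix i %| Q.
Proof. by rewrite -(prefix_mul_suffix i) dvdn_mulr. Qed.

Lemma prefix_gt0 i : 0 < prefix i.
Proof.
by have := prod_primes_gt0 qs_prime; rewrite -(prefix_mul_suffix i) muln_gt0 => /andP[].
Qed.

Lemma prefixS i : i < size qs -> prefix i.+1 = prefix i * nth 0 qs i.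
Proof. by move=> lt_i; rewrite (take_nth 0 lt_i) -cats1 big_cat big_seq1. Qed.

Lemma nth_leq_mem_drop i r : r \in drop i qs -> i < size qs /\ nth 0 qs i <= r.
Proof.
case: (ltnP i (size qs)) => [lt_i | ?]; last by rewrite drop_oversize.
have := drop_sorted i qs_sorted; rewrite (drop_nth 0 lt_i) inE /= => sorted_drop.
case/orP=> [/eqP -> // | r_in]; split=> //.
exact: (allP (order_path_min leq_trans sorted_drop)).
Qed.

Definition fill_primes c := c * prefix (last_fit x (fun i => c * prefix i) (size qs)).

Lemma odd_maxdiv_fill_primes c : odd_maxdiv x a M c -> odd_maxdiv x e (M * Q) (fill_primes c).
Proof.
case=> c_M c_x c_max; rewrite /fill_primes; set i := last_fit _ _ _.
have i_le : i <= size qs := last_fit_le _ _ _.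
split; first by rewrite dvdn_mul ?prefix_dvdn.
  by apply: (@leRb_last_fit _ (fun j => c * prefix j)); rewrite take0 big_nil muln1.
move=> r r_pr; have r_gt0 := prime_gt0 r_pr.
have step : i < size qs -> nth 0 qs i <= 2 ^ e * r -> ~~ leRb (c * prefix i * 2 ^ e * r) x.
  move=> lt_i le_qi; apply: contra (last_fit_max lt_i); apply: leRb_leq.
  by rewrite prefixS // -!mulnA leq_mul2l leq_mul2l le_qi !orbT.
have [M' def_M] := dvdnP c_M; have c_gt0 := dvdn_gt0 (odd_gt0 M_odd) c_M.
have cpre_gt0 : 0 < c * prefix i by rewrite muln_gt0 prefix_gt0 c_gt0.
rewrite def_M -(prefix_mul_suffix i).
rewrite (_ : M' * c * _ = c * prefix i * (M' * suffix i)); last by ring.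
rewrite [r * _]mulnC dvdn_pmul2l // Euclid_dvdM // => /orP[r_M' | r_suffix].
- have r_M : r * c %| M by rewrite def_M dvdn_pmul2r.
  have r_ge3 : 3 <= r.
    by apply: odd_prime_gt2 (dvdn_odd (dvdn_trans (dvdn_mulr _ _) r_M) M_odd) r_pr.
  case: ltngtP i_le => // [lt_i _ | eq_i _].
    apply: step => //; apply: leq_trans (allP qs_le _ (mem_nth 0 lt_i)) _.
    by rewrite mulnC leq_mul2l r_ge3 orbT.
  apply: contra (c_max _ r_pr r_M); apply: leRb_leq.
  rewrite eq_i take_size -!mulnA leq_mul2l mulnA leq_mul2r [Q * _]mulnC.
  by rewrite le_a !orbT.
- have drop_prime : all prime (drop i qs) by apply/allP => q /mem_drop; apply/allP.
  have [lt_i le_r] := nth_leq_mem_drop (prime_dvdn_prod_primes r_pr drop_prime r_suffix).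
  by apply: step; rewrite // (leq_trans le_r) // leq_pmull // expn_gt0.
Qed.

Lemma maxdivs_le_mul_sorted_primes :
  size (maxdivs x (M * 2 ^ a)) <= size (maxdivs x (M * Q * 2 ^ e)).
Proof.
apply: (maxdivs_le_odd_maxdiv (h := fill_primes)); rewrite ?oddM ?M_odd ?odd_prod //.
  exact: odd_maxdiv_fill_primes.
have dvd_fill c c' i j : c %| M -> c * prefix i = c' * prefix j -> c %| c'.
  move=> c_M eq_cc'; have cop : coprime c (prefix j).
    exact: coprime_dvdl c_M (coprime_dvdr (prefix_dvdn j) cop_MQ).
  by rewrite -(Gauss_dvdl _ cop) -eq_cc' dvdn_mulr.
move=> c1 c2 [c1_M _ _] [c2_M _ _] eq_fill; apply/eqP; rewrite eqn_dvd.
by rewrite (dvd_fill _ _ _ _ c1_M eq_fill) (dvd_fill _ _ _ _ c2_M (esym eq_fill)).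
Qed.

End MulSortedPrimes.

Section LeastMissingPrime.
Variable M : nat.
Hypotheses (M_odd : odd M) (M_red : odd_reduced M).

Lemma exists_odd_prime_ndvdn : exists q, [&& prime q, odd q & ~~ (q %| M)].
Proof.
have [q lt_q q_pr] := prime_above (maxn M 2); rewrite gtn_max in lt_q.
case/andP: lt_q => lt_Mq lt_2q; exists q; rewrite q_pr /=.
have [q2 | q_odd] := even_prime q_pr; first by rewrite q2 in lt_2q.
by rewrite q_odd; apply: contraL lt_Mq => /(dvdn_leq (odd_gt0 M_odd)); rewrite leqNgt.
Qed.

Definition q0 := ex_minn exists_odd_prime_ndvdn.

Lemma q0_spec : [/\ prime q0, odd q0, ~~ (q0 %| M) &
  forall q, prime q -> odd q -> ~~ (q %| M) -> q0 <= q].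
Proof.
rewrite /q0; case: ex_minnP => q /and3P[q_pr q_odd q_M] q_min; split=> // r r_pr r_odd r_M.
by apply: q_min; rewrite r_pr r_odd r_M.
Qed.

Lemma prime_dvdn_lt_q0 p : prime p -> p %| M -> p < q0.
Proof.
move=> p_pr p_M; have [q0_pr q0_odd q0_M _] := q0_spec.
have p_odd : odd p := dvdn_odd p_M M_odd.
have p_neq : p != q0 by apply: contraNneq q0_M => <-.
rewrite ltn_neqAle p_neq leqNgt; apply/negP => lt_q0p.
have lq0 : logn q0 M = 0 by apply/eqP; rewrite logn_eq0 ?odd_gt0.
have lp : 0 < logn p M by rewrite lt0n logn_eq0 ?odd_gt0 ?p_M.
have p2 : p <> 2 by move=> p2; rewrite p2 in p_odd.
have q02 : q0 <> 2 by move=> q02; rewrite q02 in q0_odd.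
have := M_red p_pr q0_pr p2 q02; rewrite lq0 => lt_pk.
have : p <= p ^ ((logn p M).+1 %/ 2).
  by rewrite -{1}(expn1 p) leq_pexp2l ?(prime_gt0 p_pr) // divn_gt0 // ltnS.
by move/leq_ltn_trans/(_ lt_pk); rewrite ltnNge ltnW.
Qed.

Lemma reduced_small_pow2 e : 2 ^ e < 8 * q0 ^ 2 -> reduced (M * 2 ^ e).
Proof.
move=> small_e; apply: reduced_odd_mul_pow2 => // r r_pr r2 r_M.
have [_ _ _ q0_min] := q0_spec.
have r_odd : odd r by case: (even_prime r_pr).
by apply: leq_trans small_e _; rewrite leq_mul2l leq_sqr q0_min.
Qed.

End LeastMissingPrime.

Lemma logn_prod_primes p s : prime p -> all prime s ->
  logn p (\prod_(q <- s) q) = count_mem p s.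
Proof.
move=> p_pr; elim: s => [|q s IH] /=; first by rewrite big_nil logn1.
case/andP=> q_pr s_prime; rewrite big_cons lognM ?prod_primes_gt0 ?(prime_gt0 q_pr) //.
by rewrite logn_prime // IH // eq_sym.
Qed.

Section Padding.
Variables (M e : nat).
Hypotheses (M_odd : odd M) (M_red : odd_reduced M).
Local Notation q0 := (q0 M_odd).
Hypothesis large_e : 8 * q0 ^ 2 <= 2 ^ e.

Definition padding_primes L := [seq p <- index_iota q0 L.+1 | prime p].

Lemma mem_padding_primes L p : (p \in padding_primes L) = [&& prime p, q0 <= p & p <= L].
Proof. by rewrite mem_filter mem_index_iota ltnS andbC. Qed.

Lemma padding_primes_prime L : all prime (padding_primes L).
Proof. by apply/allP=> p; rewrite mem_padding_primes => /andP[]. Qed.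

(** The factor 3 bounds the padding primes by 3 * 2^epad ([Lmax_le]), as
    [maxdivs_le_mul_sorted_primes] requires since it compares them with odd
    primes, which are at least 3. *)
Definition padding_fits L := (q0 <= L) && (L * \prod_(p <- padding_primes L) p <= 3 * 2 ^ e).

Lemma padding_fits_q0 : padding_fits q0.
Proof.
have [q0_pr _ _ _] := q0_spec M_odd.
rewrite /padding_fits leqnn /padding_primes /index_iota subSnn /= q0_pr big_seq1.
by move: large_e; rewrite expnS expn1; lia.
Qed.

Lemma padding_fits_bound L : padding_fits L -> L <= 3 * 2 ^ e.
Proof.
by case/andP=> _; apply: leq_trans; rewrite leq_pmulr ?prod_primes_gt0 ?padding_primes_prime.
Qed.

Definition Lmax := ex_maxn (ex_intro _ q0 padding_fits_q0) padding_fits_bound.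

Lemma Lmax_spec : padding_fits Lmax /\ forall L, padding_fits L -> L <= Lmax.
Proof. by rewrite /Lmax; case: ex_maxnP. Qed.

Lemma exists_prime_above_Lmax : exists p, prime p && (Lmax < p).
Proof. by have [p lt_p p_pr] := prime_above Lmax; exists p; rewrite p_pr. Qed.

Definition qnext := ex_minn exists_prime_above_Lmax.

Lemma qnext_spec : [/\ prime qnext, Lmax < qnext & forall p, prime p -> Lmax < p -> qnext <= p].
Proof.
rewrite /qnext; case: ex_minnP => p /andP[p_pr lt_p] p_min; split=> // r r_pr lt_r.
by apply: p_min; rewrite r_pr.
Qed.

Local Notation qs := (padding_primes Lmax).
Local Notation Q := (\prod_(p <- qs) p).

Lemma q0_le_Lmax : q0 <= Lmax.
Proof. by case: Lmax_spec => /andP[]. Qed.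

Lemma prod_padding_primes_qnext : \prod_(p <- padding_primes qnext) p = Q * qnext.
Proof.
have [qn_pr lt_qn qn_min] := qnext_spec; have le_q0 := q0_le_Lmax.
have gap : \prod_(Lmax.+1 <= p < qnext) (if prime p then p else 1) = 1.
  rewrite big_nat_cond big1 // => p /andP[/andP[lt_p lt_pqn] _].
  by case: ifP => // p_pr; have := qn_min p p_pr lt_p; lia.
rewrite !big_filter big_mkcond big_nat_recr /= ?qn_pr; last lia.
by rewrite (@big_cat_nat _ _ _ Lmax.+1) //= ?gap ?muln1 -?big_mkcond //; lia.
Qed.

Lemma qnext_large : 3 * 2 ^ e < qnext * (Q * qnext).
Proof.
have [qn_pr lt_qn _] := qnext_spec; have [_ Lmax_max] := Lmax_spec.
rewrite -prod_padding_primes_qnext ltnNge; apply/negP => fits_qn.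
have : padding_fits qnext by rewrite /padding_fits fits_qn andbT; have := q0_le_Lmax; lia.
by move/Lmax_max; lia.
Qed.

Lemma padding_primes_odd L : all odd (padding_primes L).
Proof.
have [q0_pr q0_odd _ _] := q0_spec M_odd.
apply/allP=> p; rewrite mem_padding_primes => /and3P[p_pr le_q0p _].
by case: (even_prime p_pr) => // p2; move: le_q0p; rewrite p2 leqNgt odd_prime_gt2.
Qed.

Lemma prod_padding_primes_lt_pow2 : Q < 2 ^ e.
Proof.
have [q0_pr q0_odd _ _] := q0_spec M_odd; have q0_gt2 := odd_prime_gt2 q0_odd q0_pr.
have [/andP[_ fits_Lmax] _] := Lmax_spec.
have le_Q : 3 * Q <= 3 * 2 ^ e.
  by apply: leq_trans fits_Lmax; rewrite leq_mul2r (leq_trans q0_gt2 q0_le_Lmax) orbT.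
rewrite ltn_neqAle -(leq_pmul2l (isT : 0 < 3)) le_Q andbT.
have e_gt0 : 0 < e.
  rewrite lt0n; apply/eqP => e0; move: large_e; rewrite e0 expn0 leqNgt.
  by rewrite (@leq_trans 8) // leq_pmulr // expn_gt0 prime_gt0.
apply: contraTneq (odd_prod (padding_primes_odd Lmax)) => ->.
by rewrite oddX negb_or -lt0n e_gt0.
Qed.

Lemma exists_pow2_mul_prod_ge : exists k, 2 ^ e <= 2 ^ k * Q.
Proof. by exists e; rewrite leq_pmulr ?prod_primes_gt0 ?padding_primes_prime. Qed.

Definition epad := ex_minn exists_pow2_mul_prod_ge.

Lemma epad_spec : [/\ 0 < epad, 2 ^ e <= 2 ^ epad * Q & 2 ^ epad.-1 * Q < 2 ^ e].
Proof.
rewrite /epad; case: ex_minnP => k le_k k_min.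
have k_gt0 : 0 < k.
  by case: k le_k {k_min} => //; rewrite expn0 mul1n leqNgt prod_padding_primes_lt_pow2.
by split=> //; rewrite ltnNge; apply/negP => /k_min; lia.
Qed.

Lemma Lmax_le : Lmax <= 3 * 2 ^ epad.
Proof.
have [/andP[_ fits_Lmax] _] := Lmax_spec; have [_ le_e _] := epad_spec.
rewrite -(leq_pmul2r (prod_primes_gt0 (padding_primes_prime Lmax))) (leq_trans fits_Lmax) //.
by rewrite -mulnA leq_mul2l le_e orbT.
Qed.

Lemma gt_Lmax_of_ndvdn r : prime r -> odd r -> ~~ (r %| M * Q) -> Lmax < r.
Proof.
move=> r_pr r_odd r_MQ; have [_ _ _ q0_min] := q0_spec M_odd.
have r_M : ~~ (r %| M) by apply: contra r_MQ; apply: dvdn_mulr.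
rewrite ltnNge; apply: contra r_MQ => le_r; apply: dvdn_mull.
by rewrite (big_rem r) ?dvdn_mulr // mem_padding_primes r_pr q0_min.
Qed.

Lemma padding_primes_ndvdn p : p \in padding_primes Lmax -> ~~ (p %| M).
Proof.
rewrite mem_padding_primes => /and3P[p_pr le_q0p _].
by apply/negP => /(prime_dvdn_lt_q0 M_odd M_red p_pr); rewrite ltnNge le_q0p.
Qed.

Lemma logn_prod_padding_primes p : prime p -> logn p Q = (p \in qs).
Proof.
move=> p_pr; rewrite logn_prod_primes ?padding_primes_prime // count_uniq_mem //.
by rewrite filter_uniq // iota_uniq.
Qed.

Lemma odd_reduced_mul_prod : odd_reduced (M * Q).
Proof.
have M_gt0 := odd_gt0 M_odd; have Q_gt0 := prod_primes_gt0 (padding_primes_prime Lmax).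
move=> p q p_pr q_pr p2 q2; rewrite !lognM // !logn_prod_padding_primes //.
case: (boolP (p \in qs)) => [p_qs | p_qs]; last first.
  apply: leq_ltn_trans (M_red p_pr q_pr p2 q2); rewrite leq_pexp2l ?prime_gt0 //.
  by rewrite addn0 leq_div2l // ltnS ltnS leq_addr.
have lpM : logn p M = 0 by apply/eqP; rewrite logn_eq0 ?padding_primes_ndvdn.
rewrite lpM; case: (posnP (logn q M + (q \in qs))) => [lq0 | lq_gt0]; last first.
  by rewrite divn_small ?prime_gt1 //; lia.
have q_MQ : ~~ (q %| M * Q).
  by rewrite -logn_eq0 ?muln_gt0 ?M_gt0 // lognM // logn_prod_padding_primes // lq0.
rewrite lq0 expn1; apply: leq_ltn_trans (gt_Lmax_of_ndvdn q_pr _ q_MQ).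
  by move: p_qs; rewrite mem_padding_primes => /and3P[].
by case: (even_prime q_pr).
Qed.

Lemma pow2_epad_small r : prime r -> r <> 2 -> ~~ (r %| M * Q) -> 2 ^ epad < 8 * r ^ 2.
Proof.
move=> r_pr r2 r_MQ; have r_odd : odd r by case: (even_prime r_pr).
have [_ _ qn_min] := qnext_spec; have le_qn := qn_min r r_pr (gt_Lmax_of_ndvdn r_pr r_odd r_MQ).
have [epad_gt0 _ lt_e] := epad_spec; have Q_gt0 := prod_primes_gt0 (padding_primes_prime Lmax).
have lt_qn : 3 * 2 ^ epad.-1 < qnext * qnext.
  rewrite -(ltn_pmul2r Q_gt0); have -> : qnext * qnext * Q = qnext * (Q * qnext) by ring.
  by apply: leq_ltn_trans qnext_large; rewrite -mulnA leq_mul2l ltnW ?orbT.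
have le_r2 : qnext * qnext <= r ^ 2 by rewrite -mulnn leq_mul.
by rewrite -(prednK epad_gt0) expnS; lia.
Qed.

Lemma exists_reduced_padding : exists m, [/\ reduced m, M * 2 ^ e <= m,
  m <= (M * 2 ^ e).*2 - 2 & forall x, size (maxdivs x (M * 2 ^ e)) <= size (maxdivs x m)].
Proof.
have [epad_gt0 le_e lt_e] := epad_spec; have M_gt0 := odd_gt0 M_odd.
exists (M * Q * 2 ^ epad); split.
- apply: reduced_odd_mul_pow2; last exact: pow2_epad_small.
    by rewrite oddM M_odd odd_prod ?padding_primes_odd.
  exact: odd_reduced_mul_prod.
- by rewrite -mulnA leq_mul2l mulnC le_e orbT.
- have : M * (2 ^ epad.-1 * Q) < M * 2 ^ e by rewrite ltn_pmul2l.
  rewrite -(prednK epad_gt0) expnS (_ : M * Q * _ = 2 * (M * (2 ^ epad.-1 * Q))); last by ring.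
  by move: (M * _) (M * 2 ^ e) => a b; lia.
move=> x; apply: maxdivs_le_mul_sorted_primes => //.
- exact: padding_primes_prime.
- exact: padding_primes_odd.
- exact/(sorted_filter leq_trans)/iota_sorted.
- rewrite big_seq; apply: (big_ind (coprime M)) => [|m n|p]; first exact: coprimen1.
    by rewrite coprimeMr => -> ->.
  move=> p_qs; rewrite coprime_sym prime_coprime ?padding_primes_ndvdn //.
  exact: (allP (padding_primes_prime Lmax)).
apply/allP => q; rewrite mem_padding_primes => /and3P[_ _ le_q].
exact: leq_trans le_q Lmax_le.
Qed.

End Padding.

Lemma exists_reduced_between M e : odd M -> odd_reduced M -> 2 <= M * 2 ^ e ->
  exists m, [/\ reduced m, M * 2 ^ e <= m <= (M * 2 ^ e).*2 - 2 &
    forall x, size (maxdivs x (M * 2 ^ e)) <= size (maxdivs x m)].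
Proof.
move=> M_odd M_red ge2; case: (leqP (8 * q0 M_odd ^ 2) (2 ^ e)) => [large_e | small_e].
  have [m [m_red lb ub sizes]] := exists_reduced_padding M_red large_e.
  by exists m; rewrite lb ub.
exists (M * 2 ^ e); split=> //; first exact: reduced_small_pow2.
by rewrite leqnn /=; lia.
Qed.

Lemma exists_pow2_multiple_between M n : 0 < M -> M <= n -> 2 <= n ->
  exists e, n <= M * 2 ^ e <= n.*2 - 2.
Proof.
move=> M_gt0 le_Mn n_ge2.
have ex_e : exists e, n <= M * 2 ^ e.
  by exists n; rewrite (leq_trans (ltnW (ltn_expl n (isT : 1 < 2)))) // leq_pmull.
exists (ex_minn ex_e); case: ex_minnP => e le_ne e_min; rewrite le_ne /=.
case: e le_ne e_min => [|e] le_ne e_min; first by rewrite muln1 in le_ne *; lia.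
have : M * 2 ^ e < n by rewrite ltnNge; apply: contraTN (leqnn e.+1) => /e_min; rewrite -ltnNge.
by rewrite expnS mulnCA; move: (M * 2 ^ e) => a; lia.
Qed.

Theorem theorem3p13 :
  forall n : nat, 2 <= n ->
  exists m : nat, reduced m /\ n <= m <= 4 * n - 6 /\
    (forall x : R, size (maxdivs x n) <= size (maxdivs x m)).
Proof.
move=> n n_ge2; have n_gt0 : 0 < n by lia.
have def_n : n = n`_2^' * 2 ^ logn 2 n by rewrite -p_part mulnC partnC.
have [M [M_odd le_M M_red dom]] := odd_reduction (odd_p'part2 n).
have le_Mn : M <= n by rewrite (leq_trans le_M) // dvdn_leq // dvdn_part.
have [e /andP[lb ub]] := exists_pow2_multiple_between (odd_gt0 M_odd) le_Mn n_ge2.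
have [m [m_red /andP[lb' ub'] sizes]] := exists_reduced_between M_odd M_red (leq_trans n_ge2 lb).
exists m; split=> //; split; first by rewrite (leq_trans lb lb') /=; lia.
move=> x; apply: leq_trans (sizes x); rewrite {1}def_n.
by apply: dominates_maxdivs_le; rewrite -?def_n // odd_p'part2.
Qed.
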